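(* Let $\mathscr{A}$ be a quiver over $\Lambda$ and $R$ a set of relations on paths in $\mathscr{A}$, and $\mathscr{C}=\langle\mathscr{A}\mid R\rangle^+$. Assume: (i) every relation in $R$ has the form $a|v\sim b|w$ with $a,b,v,w\in\mathscr{A}$, and every path of length $2$ appears in at most one relation; (ii) for all $a\neq b$ in $\mathscr{A}$ with $\mathfrak{s}(a)=\mathfrak{s}(b)$ there is a unique relation in $R$ of the form $a|v\sim b|w$; (ii') for all $a\neq b$ in $\mathscr{A}$ with $\mathfrak{t}(a)=\mathfrak{t}(b)$ there is a unique relation in $R$ of the form $v|a\sim w|b$; (iii) for every $a\in\mathscr{A}$ there is a unique $z_a\in\mathscr{A}(\mathfrak{t}(a),\Lambda)$ such that: (a) for every $v\in\mathscr{A}(\mathfrak{t}(a),\Lambda)\setminus\{z_a\}$ there are $b\in\mathscr{A}(\mathfrak{s}(a),\Lambda)\setminus\{a\}$ and $w\in\mathscr{A}$ with $(a|v\sim b|w)\in R$; (b) if $(a|z_a\sim b|w)\in R$ then $b=a$ and $w=z_a$; (iii') for every $a\in\mathscr{A}$ there is a unique $z^a\in\mathscr{A}(\Lambda,\mathfrak{s}(a))$ such that: (a) for every $v\in\mathscr{A}(\Lambda,\mathfrak{s}(a))\setminus\{z^a\}$ there are $b\in\mathscr{A}(\Lambda,\mathfrak{t}(a))\setminus\{a\}$ and $w\in\mathscr{A}$ with $(v|a\sim w|b)\in R$; (b) if $(z^a|a\sim w|b)\in R$ then $b=a$ and $w=z^a$; (v) writing, for $a\neq b$ with $\mathfrak{s}(a)=\mathfrak{s}(b)$,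 $a\star b$ for the unique $v$ such that $(a|v\sim b|w)\in R$ for some $w$, one has $(a\star b)\star(a\star c)=(b\star a)\star(b\star c)$ for all pairwise distinct $a,b,c\in\mathscr{A}$ with a common source. Define $a\star' b:=a\star b$ if $a\neq b$ and $a\star' a:=z_a$ (for $\mathfrak{s}(a)=\mathfrak{s}(b)$); then each $a\star'\cdot\colon\mathscr{A}(\mathfrak{s}(a),\Lambda)\to\mathscr{A}(\mathfrak{t}(a),\Lambda)$ is a bijection. Define, for composable $a|b$, $a\rightharpoonup b:=c$ where $c$ is the unique element with $b=a\star' c$, and $a\leftharpoonup b:=(a\rightharpoonup b)\star' a$. Then $\sigma\colon\mathscr{A}\otimes\mathscr{A}\to\mathscr{A}\otimes\mathscr{A}$, $\sigma(a|b)=(a\rightharpoonup b)|(a\leftharpoonup b)$, is an involutive non-degenerate quiver-theoretic Yang--Baxter map on $\mathscr{A}$ whose structure category is $\mathscr{C}$.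
   Context: A quiver over $\Lambda$ has source/target maps $\mathfrak{s},\mathfrak{t}$; $\mathscr{A}(\lambda,\Lambda)$ (resp. $\mathscr{A}(\Lambda,\mu)$) denotes arrows with source $\lambda$ (resp. target $\mu$). $\langle\mathscr{A}\mid R\rangle^+$ is the category presented by generators $\mathscr{A}$ and relations $R$: the path category of $\mathscr{A}$ (paths $x_1|\dots|x_n$ with $\mathfrak{t}(x_i)=\mathfrak{s}(x_{i+1})$, composed by concatenation) modulo the congruence generated by $R$. A relation $u\sim v$ is regarded as the same as $v\sim u$. $\mathscr{A}\otimes\mathscr{A}$ is the quiver of composable pairs $a|b$. A quiver-theoretic Yang--Baxter map is a source/target-preserving map $\sigma$ on $\mathscr{A}\otimes\mathscr{A}$ with $(\sigma\otimes\mathrm{id})(\mathrm{id}\otimes\sigma)(\sigma\otimes\mathrm{id})=(\mathrm{id}\otimes\sigma)(\sigma\otimes\mathrm{id})(\mathrm{id}\otimes\sigma)$; involutive: $\sigma^2=\mathrm{id}$; non-degenerate: all maps $x\rightharpoonup\cdot\colon\mathscr{A}(\mathfrak{t}(x),\Lambda)\to\mathscr{A}(\mathfrak{s}(x),\Lambda)$ and $\cdot\leftharpoonup y\colon\mathscr{A}(\Lambda,\mathfrak{s}(y))\to\mathscr{A}(\Lambda,\mathfrak{t}(y))$ are bijective. Its structure category is the category presented by generators $\mathscr{A}$ and relations $x|y\sim(x\rightharpoonup y)|(x\leftharpoonup y)$. *)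

From Stdlib Require Import List.
Import ListNotations.

Set Implicit Arguments.

Section Quiver.
Variables (Lam A : Type) (s t : A -> Lam).

(* a path x1|...|xn : composable list of arrows (the empty list stands
   for identity paths; its vertex is irrelevant here) *)
Fixpoint is_path (l : list A) : Prop :=
  match l with
  | x :: ((y :: _) as l') => t x = s y /\ is_path l'
  | _ => True
  end.

Inductive congr (Rel : list A -> list A -> Prop) : list A -> list A -> Prop :=
| congr_step x u v y : Rel u v -> is_path (x ++ u ++ y) -> is_path (x ++ v ++ y) ->
    congr Rel (x ++ u ++ y) (x ++ v ++ y)
| congr_refl p : congr Rel p p
| congr_sym p q : congr Rel p q -> congr Rel q p
| congr_trans p q r : congr Rel p q -> congr Rel q r -> congr Rel p r.

Definition inR (R : list A -> list A -> Prop) (p q : list A) : Prop := R p q \/ R q p.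

Definition isZ (R : list A -> list A -> Prop) (a z : A) : Prop :=
  s z = t a /\
  (forall v, s v = t a -> v <> z ->
     exists b w, s b = s a /\ b <> a /\ inR R [a; v] [b; w]) /\
  (forall b w, inR R [a; z] [b; w] -> b = a /\ w = z).

Definition isZ' (R : list A -> list A -> Prop) (a z : A) : Prop :=
  t z = s a /\
  (forall v, t v = s a -> v <> z ->
     exists b w, t b = t a /\ b <> a /\ inR R [v; a] [w; b]) /\
  (forall b w, inR R [z; a] [w; b] -> b = a /\ w = z).

Definition starR (R : list A -> list A -> Prop) (a b v : A) : Prop :=
  a <> b /\ s a = s b /\ exists w, inR R [a; v] [b; w].

Definition starP (R : list A -> list A -> Prop) (a b v : A) : Prop :=
  (a <> b /\ starR R a b v) \/ (a = b /\ isZ R a v).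

Definition rhR (R : list A -> list A -> Prop) (a b c : A) : Prop :=
  s c = s a /\ starP R a c b.

Definition lhR (R : list A -> list A -> Prop) (a b d : A) : Prop :=
  exists c, rhR R a b c /\ starP R c a d.

Definition s12 (sigma : A -> A -> A * A) (p : A * A * A) : A * A * A :=
  let '(x, y, z) := p in let '(x', y') := sigma x y in (x', y', z).
Definition s23 (sigma : A -> A -> A * A) (p : A * A * A) : A * A * A :=
  let '(x, y, z) := p in let '(y', z') := sigma y z in (x, y', z').

Definition is_QYB (sigma : A -> A -> A * A) : Prop :=
  (forall a b, t a = s b ->
     s (fst (sigma a b)) = s a /\ t (fst (sigma a b)) = s (snd (sigma a b)) /\ t (snd (sigma a b)) = t b) /\
  (forall a b c, t a = s b -> t b = s c ->
     s12 sigma (s23 sigma (s12 sigma (a, b, c))) = s23 sigma (s12 sigma (s23 sigma (a, b, c)))).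

Definition involutive_QYB (sigma : A -> A -> A * A) : Prop :=
  forall a b, t a = s b -> sigma (fst (sigma a b)) (snd (sigma a b)) = (a, b).

Definition nondegenerate_QYB (sigma : A -> A -> A * A) : Prop :=
  (forall x z, s z = s x -> exists! y, s y = t x /\ (fst (sigma x y)) = z) /\
  (forall y z, t z = t y -> exists! x, t x = s y /\ (snd (sigma x y)) = z).

(* defining relations of the structure category: x|y ~ (x -> y)|(x <- y) *)
Definition sigma_rel (sigma : A -> A -> A * A) (p q : list A) : Prop :=
  exists x y, t x = s y /\ p = [x; y] /\ q = [(fst (sigma x y)); (snd (sigma x y))].

End Quiver.

From Stdlib Require Import List Classical ClassicalEpsilon.
Import ListNotations.

(* The operation a *' b makes the arrows into a quiver-theoretic cycle set: every
   a *' . is a bijection, and the cycle law (a * b) * (a * c) = (b * a) * (b * c)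
   of (v), assumed for pairwise distinct a, b, c, extends to all a, b, c because
   the arrow z^a of (iii') is unique.  Writing every composable pair as
   a | a *' b, the map is sigma (a | a *' b) = b | b *' a, and on composable
   triples a | a *' b | (a *' b) *' (a *' c) the maps sigma12 and sigma23 act as
   the transpositions (a b) and (b c); the braid relation, involutivity and
   non-degeneracy follow.  Finally a relation a | v ~ b | w of R with a <> b is
   exactly sigma (a | v) = b | w, while the pairs fixed by sigma are the
   a | z_a, which R relates to nothing but themselves. *)

Set Implicit Arguments.

Lemma inR_sym (A : Type) (Rel : list A -> list A -> Prop) p q :
  inR Rel p q -> inR Rel q p.
Proof. unfold inR; tauto. Qed.

Lemma congr_incl (Lam A : Type) (s t : A -> Lam) (Rel1 Rel2 : list A -> list A -> Prop) :
  (forall u v, Rel1 u v -> u = v \/ inR Rel2 u v) ->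
  forall p q, congr s t Rel1 p q -> congr s t Rel2 p q.
Proof.
  intros Hincl p q H.
  induction H as [x u v y Huv Hu Hv | p | p q _ IH | p q r _ IH1 _ IH2].
  - destruct (Hincl u v Huv) as [<- | [H | H]].
    + apply congr_refl.
    + now apply congr_step.
    + now apply congr_sym, congr_step.
  - apply congr_refl.
  - now apply congr_sym.
  - now apply congr_trans with q.
Qed.

Section QuiverCycleSet.

Variables (Lam A : Type) (s t : A -> Lam) (R : list A -> list A -> Prop).

Hypothesis rel_shape : forall p q, R p q -> exists a v b w,
  p = [a; v] /\ q = [b; w] /\ t a = s v /\ t b = s w /\ s a = s b /\ t v = t w.
Hypothesis rel_unique : forall a v p q, inR R [a; v] p -> inR R [a; v] q -> p = q.
Hypothesis rel_source : forall a b, a <> b -> s a = s b ->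
  exists! vw : A * A, inR R [a; fst vw] [b; snd vw].
Hypothesis rel_target : forall a b, a <> b -> t a = t b ->
  exists! vw : A * A, inR R [fst vw; a] [snd vw; b].
Hypothesis zero_unique : forall a, exists! z, isZ s t R a z.
Hypothesis cozero_unique : forall a, exists! z, isZ' s t R a z.
Hypothesis cycle_law_distinct : forall a b c, a <> b -> b <> c -> a <> c ->
  s a = s b -> s a = s c ->
  forall v1 v2 v3 v4 u1 u2,
  starR s R a b v1 -> starR s R a c v2 -> starR s R b a v3 -> starR s R b c v4 ->
  starR s R v1 v2 u1 -> starR s R v3 v4 u2 -> u1 = u2.

Lemma inR_endpoints a v b w : inR R [a; v] [b; w] ->
  t a = s v /\ t b = s w /\ s a = s b /\ t v = t w.
Proof.
  intros [H | H]; destruct (rel_shape H) as (a' & v' & b' & w' & E1 & E2 & H1 & H2 & H3 & H4);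
    injection E1 as -> ->; injection E2 as -> ->; auto.
Qed.

Lemma inR_same_head a v w : inR R [a; v] [a; w] -> w = v.
Proof.
  intros H. destruct (zero_unique a) as [z [[_ [Hnonzero Hzero]] _]].
  destruct (classic (v = z)) as [-> | Hvz].
  - now destruct (Hzero _ _ H).
  - destruct (inR_endpoints H) as [Hav _].
    destruct (Hnonzero v (eq_sym Hav) Hvz) as (b & w' & _ & Hba & Hbw).
    injection (rel_unique H Hbw). congruence.
Qed.

Lemma starP_exists a b : s b = s a -> exists v, s v = t a /\ starP s t R a b v.
Proof.
  intros Hs. destruct (classic (a = b)) as [<- | Hab].
  - destruct (zero_unique a) as [z [Hz _]].
    exists z. split; [apply Hz | now right].
  - destruct (rel_source Hab (eq_sym Hs)) as [[v w] [Hvw _]]. simpl in Hvw.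
    exists v. split; [symmetry; apply (inR_endpoints Hvw) |].
    left. repeat split; auto. now exists w.
Qed.

Lemma starP_functional a b v v' : starP s t R a b v -> starP s t R a b v' -> v = v'.
Proof.
  intros [[Hab [_ [Hs [w Hw]]]] | [Hab Hz]] [[Hab' [_ [_ [w' Hw']]]] | [Hab' Hz']];
    try contradiction.
  - destruct (rel_source Hab Hs) as [vw [_ Huniq]].
    pose proof (eq_trans (eq_sym (Huniq (v, w) Hw)) (Huniq (v', w') Hw')) as E.
    now injection E.
  - destruct (zero_unique a) as [z [_ Huniq]].
    now rewrite <- (Huniq _ Hz), <- (Huniq _ Hz').
Qed.

Lemma starP_injective a b c v : starP s t R a b v -> starP s t R a c v -> b = c.
Proof.
  intros [[_ [_ [_ [w Hw]]]] | [<- [_ [_ Hz]]]] [[_ [_ [_ [w' Hw']]]] | [<- [_ [_ Hz']]]].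
  - now injection (rel_unique Hw Hw').
  - now destruct (Hz' _ _ Hw).
  - now destruct (Hz _ _ Hw').
  - reflexivity.
Qed.

Lemma starP_surjective a v : s v = t a -> exists b, s b = s a /\ starP s t R a b v.
Proof.
  intros Hs. destruct (zero_unique a) as [z [Hz _]].
  destruct (classic (v = z)) as [-> | Hvz].
  - exists a. split; [reflexivity | now right].
  - destruct Hz as [_ [Hnonzero _]].
    destruct (Hnonzero v Hs Hvz) as (b & w & Hb & Hba & Hw).
    exists b. split; [exact Hb |].
    left. repeat split; auto. now exists w.
Qed.

Lemma starP_bijective a :
  (forall b, s b = s a -> exists! v, s v = t a /\ starP s t R a b v) /\
  (forall v, s v = t a -> exists! b, s b = s a /\ starP s t R a b v).
Proof.
  split.
  - intros b Hb. destruct (starP_exists Hb) as [v Hv].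
    exists v. split; [exact Hv |]. intros v' [_ Hv']. exact (starP_functional (proj2 Hv) Hv').
  - intros v Hv. destruct (starP_surjective Hv) as [b Hb].
    exists b. split; [exact Hb |]. intros b' [_ Hb']. exact (starP_injective (proj2 Hb) Hb').
Qed.

Definition star (a b : A) : A :=
  epsilon (inhabits a) (fun v => s v = t a /\ starP s t R a b v).

Lemma star_spec a b : s b = s a -> s (star a b) = t a /\ starP s t R a b (star a b).
Proof. intros Hb. unfold star. apply epsilon_spec, starP_exists, Hb. Qed.

Lemma star_eq a b v : s b = s a -> starP s t R a b v -> star a b = v.
Proof. intros Hb Hv. exact (starP_functional (proj2 (star_spec Hb)) Hv). Qed.

Lemma star_inj a b c : s b = s a -> s c = s a -> star a b = star a c -> b = c.
Proof.
  intros Hb Hc E. apply (starP_injective (proj2 (star_spec Hb))).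
  rewrite E. apply star_spec, Hc.
Qed.

Lemma star_surj a y : s y = t a -> exists b, s b = s a /\ star a b = y.
Proof.
  intros Hy. destruct (starP_surjective Hy) as [b [Hb Hby]].
  exists b. split; [exact Hb | exact (star_eq Hb Hby)].
Qed.

Lemma star_diag_zero a : isZ s t R a (star a a).
Proof.
  destruct (@star_spec a a eq_refl) as [_ [[Haa _] | [_ Hz]]]; [now contradiction Haa | exact Hz].
Qed.

Lemma star_starR a b : a <> b -> s b = s a -> starR s R a b (star a b).
Proof.
  intros Hab Hb. destruct (star_spec Hb) as [_ [[_ H] | [Hba _]]]; [exact H | congruence].
Qed.

Lemma star_rel a b : a <> b -> s b = s a -> inR R [a; star a b] [b; star b a].
Proof.
  intros Hab Hb. destruct (star_starR Hab Hb) as [_ [_ [w Hw]]].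
  replace (star b a) with w; [exact Hw |].
  symmetry. apply star_eq; [now symmetry |].
  left. repeat split; auto. exists (star a b). now apply inR_sym.
Qed.

Lemma target_star_swap a b : s b = s a -> t (star a b) = t (star b a).
Proof.
  intros Hb. destruct (classic (a = b)) as [<- | Hab]; [reflexivity |].
  apply (inR_endpoints (star_rel Hab Hb)).
Qed.

Definition rh (a y : A) : A := epsilon (inhabits a) (fun c => s c = s a /\ star a c = y).

Definition sigmaR (a y : A) : A * A := (rh a y, star (rh a y) a).

Lemma rh_star a b : s b = s a -> rh a (star a b) = b.
Proof.
  intros Hb.
  assert (Hrh : s (rh a (star a b)) = s a /\ star a (rh a (star a b)) = star a b).
  { unfold rh. apply epsilon_spec. now exists b. }
  exact (star_inj (proj1 Hrh) Hb (proj2 Hrh)).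
Qed.

Lemma sigmaR_star u v : s v = s u -> sigmaR u (star u v) = (v, star v u).
Proof. intros Hv. unfold sigmaR. now rewrite rh_star. Qed.

Lemma sigmaR_cases x y : t x = s y ->
  (sigmaR x y = (x, y) /\ isZ s t R x y) \/
  (fst (sigmaR x y) <> x /\ inR R [x; y] [fst (sigmaR x y); snd (sigmaR x y)]).
Proof.
  intros Hxy. destruct (star_surj (eq_sym Hxy)) as [c [Hc <-]].
  rewrite (sigmaR_star Hc); simpl.
  destruct (classic (c = x)) as [-> | Hcx].
  - left. split; [reflexivity | apply star_diag_zero].
  - right. split; [exact Hcx |]. apply star_rel; auto.
Qed.

Lemma sigmaR_of_rel x y c d : inR R [x; y] [c; d] -> c <> x -> sigmaR x y = (c, d).
Proof.
  intros H Hcx. destruct (inR_endpoints H) as (_ & _ & Hs & _).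
  assert (Hy : star x c = y).
  { apply star_eq; [now symmetry |]. left. repeat split; auto. now exists d. }
  rewrite <- Hy in H |- *. rewrite (sigmaR_star (eq_sym Hs)).
  injection (rel_unique H (star_rel (not_eq_sym Hcx) (eq_sym Hs))) as ->. reflexivity.
Qed.

Lemma sigmaR_snd_cozero x y : t x = s y -> snd (sigmaR x y) = y -> isZ' s t R y x.
Proof.
  intros Hxy Hsnd. destruct (cozero_unique y) as [u [Hu _]].
  destruct (classic (x = u)) as [-> | Hxu]; [exact Hu |].
  destruct Hu as [_ [Hnoncozero _]].
  destruct (Hnoncozero x Hxy Hxu) as (b & w & _ & Hby & Hw).
  destruct (sigmaR_cases Hxy) as [[_ [_ [_ Hzero]]] | [_ H]].
  - now destruct (Hzero _ _ Hw).
  - injection (rel_unique H Hw) as _ Hb. contradiction Hby. rewrite <- Hb. exact Hsnd.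
Qed.

Lemma cozero_inj y x x' : isZ' s t R y x -> isZ' s t R y x' -> x = x'.
Proof.
  intros Hx Hx'. destruct (cozero_unique y) as [u [_ Huniq]].
  now rewrite <- (Huniq _ Hx), <- (Huniq _ Hx').
Qed.

Lemma star_comm_cozero u v : s v = s u -> star v u = star u v -> isZ' s t R (star u v) u.
Proof.
  intros Hv E. apply sigmaR_snd_cozero.
  - symmetry. apply star_spec, Hv.
  - now rewrite (sigmaR_star Hv).
Qed.

Lemma star_swap_neq a b : a <> b -> s b = s a -> star a b <> star b a.
Proof.
  intros Hab Hb E. apply Hab. apply (@cozero_inj (star a b)).
  - apply star_comm_cozero; auto.
  - rewrite E. apply star_comm_cozero; auto.
Qed.

Lemma star_diag_inj v w : star v v = star w w -> v = w.
Proof.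
  intros E. apply (@cozero_inj (star v v)).
  - now apply star_comm_cozero.
  - rewrite E. now apply star_comm_cozero.
Qed.

Lemma star_cycle_distinct a b c : a <> b -> b <> c -> a <> c -> s b = s a -> s c = s a ->
  star (star a b) (star a c) = star (star b a) (star b c).
Proof.
  intros Hab Hbc Hac Hb Hc.
  assert (Hcb : s c = s b) by congruence.
  assert (Hsa : s (star a c) = s (star a b)).
  { now rewrite (proj1 (star_spec Hb)), (proj1 (star_spec Hc)). }
  assert (Hsb : s (star b c) = s (star b a)).
  { now rewrite (proj1 (star_spec (eq_sym Hb))), (proj1 (star_spec Hcb)). }
  assert (Hna : star a b <> star a c) by (intro E; exact (Hbc (star_inj Hb Hc E))).
  assert (Hnb : star b a <> star b c)
    by (intro E; exact (Hac (star_inj (eq_sym Hb) Hcb E))).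
  apply (cycle_law_distinct Hab Hbc Hac (eq_sym Hb) (eq_sym Hc)
           (v1 := star a b) (v2 := star a c) (v3 := star b a) (v4 := star b c));
    apply star_starR; auto.
Qed.

(* The preimage of z_(b * a) under (a * b) *' . is some a *' c.  Then c = b would
   force a * b = b * a, and c <> a, b contradicts the cycle law for distinct arrows. *)
Lemma star_cycle_diag a b : a <> b -> s b = s a ->
  star (star a b) (star a a) = star (star b a) (star b a).
Proof.
  intros Hab Hb.
  destruct (star_spec Hb) as [Hsab _].
  assert (Hzz : s (star (star b a) (star b a)) = t (star a b)).
  { rewrite (proj1 (star_spec eq_refl)). symmetry. now apply target_star_swap. }
  destruct (star_surj Hzz) as [x [Hx Ex]].
  rewrite Hsab in Hx. destruct (star_surj Hx) as [c [Hc <-]].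
  destruct (classic (c = a)) as [-> | Hca]; [exact Ex |].
  exfalso. destruct (classic (c = b)) as [-> | Hcb].
  - exact (star_swap_neq Hab Hb (star_diag_inj _ _ Ex)).
  - assert (Hcb' : s c = s b) by congruence.
    rewrite (star_cycle_distinct Hab (not_eq_sym Hcb) (not_eq_sym Hca) Hb Hc) in Ex.
    apply Hca, (star_inj Hcb' (eq_sym Hb)).
    apply (star_inj (a := star b a)); [| reflexivity | exact Ex].
    now rewrite (proj1 (star_spec Hcb')), (proj1 (star_spec (eq_sym Hb))).
Qed.

Lemma star_cycle a b c : s b = s a -> s c = s a ->
  star (star a b) (star a c) = star (star b a) (star b c).
Proof.
  intros Hb Hc.
  destruct (classic (a = b)) as [<- | Hab]; [reflexivity |].
  destruct (classic (a = c)) as [<- | Hac]; [now apply star_cycle_diag |].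
  destruct (classic (b = c)) as [<- | Hbc].
  - symmetry. apply star_cycle_diag; auto.
  - now apply star_cycle_distinct.
Qed.

Lemma composable_triple_param x y z : t x = s y -> t y = s z ->
  exists b c, s b = s x /\ s c = s x /\ y = star x b /\ z = star (star x b) (star x c).
Proof.
  intros Hxy Hyz.
  destruct (star_surj (eq_sym Hxy)) as [b [Hb <-]].
  destruct (star_surj (eq_sym Hyz)) as [y' [Hy' <-]].
  rewrite (proj1 (star_spec Hb)) in Hy'.
  destruct (star_surj Hy') as [c [Hc <-]].
  now exists b, c.
Qed.

Lemma s12_sigmaR_param a b c : s b = s a -> s c = s a ->
  s12 sigmaR (a, star a b, star (star a b) (star a c)) =
  (b, star b a, star (star b a) (star b c)).
Proof.
  intros Hb Hc. unfold s12. now rewrite (sigmaR_star Hb), (star_cycle Hb Hc).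
Qed.

Lemma s23_sigmaR_param a b c : s b = s a -> s c = s a ->
  s23 sigmaR (a, star a b, star (star a b) (star a c)) =
  (a, star a c, star (star a c) (star a b)).
Proof.
  intros Hb Hc. unfold s23. rewrite sigmaR_star; [reflexivity |].
  now rewrite (proj1 (star_spec Hb)), (proj1 (star_spec Hc)).
Qed.

Lemma sigmaR_endpoints a y : t a = s y ->
  s (fst (sigmaR a y)) = s a /\ t (fst (sigmaR a y)) = s (snd (sigmaR a y)) /\
  t (snd (sigmaR a y)) = t y.
Proof.
  intros Hay. destruct (star_surj (eq_sym Hay)) as [b [Hb <-]].
  rewrite (sigmaR_star Hb); simpl.
  repeat split; [exact Hb | | symmetry; now apply target_star_swap].
  symmetry. apply star_spec, eq_sym, Hb.
Qed.

Lemma sigmaR_braid x y z : t x = s y -> t y = s z ->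
  s12 sigmaR (s23 sigmaR (s12 sigmaR (x, y, z))) =
  s23 sigmaR (s12 sigmaR (s23 sigmaR (x, y, z))).
Proof.
  intros Hxy Hyz.
  destruct (composable_triple_param Hxy Hyz) as (b & c & Hb & Hc & -> & ->).
  assert (Hxb : s x = s b) by now symmetry.
  assert (Hcb : s c = s b) by congruence.
  assert (Hxc : s x = s c) by now symmetry.
  assert (Hbc : s b = s c) by now symmetry.
  rewrite (s12_sigmaR_param Hb Hc), (s23_sigmaR_param Hxb Hcb), (s12_sigmaR_param Hcb Hxb).
  rewrite (s23_sigmaR_param Hb Hc), (s12_sigmaR_param Hc Hb), (s23_sigmaR_param Hxc Hbc).
  reflexivity.
Qed.

Lemma sigmaR_QYB : is_QYB s t sigmaR.
Proof. split; [exact sigmaR_endpoints | exact sigmaR_braid]. Qed.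

Lemma sigmaR_involutive : involutive_QYB s t sigmaR.
Proof.
  intros a y Hay. destruct (star_surj (eq_sym Hay)) as [b [Hb <-]].
  rewrite (sigmaR_star Hb); simpl. now rewrite (sigmaR_star (eq_sym Hb)).
Qed.

Lemma sigmaR_fst_bijective x z : s z = s x ->
  exists! y, s y = t x /\ fst (sigmaR x y) = z.
Proof.
  intros Hz. exists (star x z). split.
  - split; [apply star_spec, Hz | now rewrite (sigmaR_star Hz)].
  - intros y [Hy Hfst]. destruct (star_surj Hy) as [b [Hb <-]].
    rewrite (sigmaR_star Hb) in Hfst. simpl in Hfst. now subst b.
Qed.

Lemma sigmaR_snd_bijective y z : t z = t y ->
  exists! x, t x = s y /\ snd (sigmaR x y) = z.
Proof.
  intros Hz. destruct (classic (z = y)) as [-> | Hzy].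
  - destruct (cozero_unique y) as [u [Hu Huniq]].
    exists u. split.
    + destruct Hu as [Hus [_ Hcozero]]. split; [exact Hus |].
      destruct (sigmaR_cases Hus) as [[-> _] | [_ H]]; [reflexivity |].
      exact (proj1 (Hcozero _ _ H)).
    + intros x [Hx Hsnd]. apply Huniq, sigmaR_snd_cozero; assumption.
  - destruct (rel_target (not_eq_sym Hzy) (eq_sym Hz)) as [[v w] [Hvw Huniq]]. simpl in Hvw.
    assert (Hwv : w <> v) by (intros ->; exact (Hzy (inR_same_head Hvw))).
    exists v. split.
    + split; [apply (inR_endpoints Hvw) | now rewrite (sigmaR_of_rel Hvw Hwv)].
    + intros x [Hx Hsnd]. destruct (sigmaR_cases Hx) as [[E _] | [_ H]].
      * rewrite E in Hsnd. now contradiction Hzy.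
      * rewrite Hsnd in H. now injection (Huniq (x, fst (sigmaR x y)) H).
Qed.

Lemma sigmaR_nondegenerate : nondegenerate_QYB s t sigmaR.
Proof. split; [exact sigmaR_fst_bijective | exact sigmaR_snd_bijective]. Qed.

Lemma sigmaR_harpoons a y : t a = s y ->
  rhR s t R a y (fst (sigmaR a y)) /\ lhR s t R a y (snd (sigmaR a y)).
Proof.
  intros Hay. destruct (star_surj (eq_sym Hay)) as [b [Hb <-]].
  rewrite (sigmaR_star Hb); simpl.
  assert (Hrh : rhR s t R a (star a b) b) by (split; [exact Hb | apply star_spec, Hb]).
  split; [exact Hrh |]. exists b. split; [exact Hrh | apply star_spec, eq_sym, Hb].
Qed.

Lemma structure_category_sigmaR p q :
  congr s t R p q <-> congr s t (sigma_rel s t sigmaR) p q.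
Proof.
  split; apply congr_incl.
  - intros u v H. destruct (rel_shape H) as (a & b & c & d & -> & -> & _).
    assert (HR : inR R [a; b] [c; d]) by now left.
    destruct (classic (c = a)) as [-> | Hca].
    + left. now rewrite (inR_same_head HR).
    + right. left. exists a, b. split; [apply (inR_endpoints HR) |].
      now rewrite (sigmaR_of_rel HR Hca).
  - intros u v (x & y & Hxy & -> & ->).
    destruct (sigmaR_cases Hxy) as [[-> _] | [_ H]]; [now left | now right].
Qed.

End QuiverCycleSet.

Theorem theorem6p3 (Lam A : Type) (s t : A -> Lam) (R : list A -> list A -> Prop)
  (* (i) *)
  (Hi1 : forall p q, R p q -> exists a v b w,
      p = [a; v] /\ q = [b; w] /\ t a = s v /\ t b = s w /\ s a = s b /\ t v = t w)
  (Hi2 : forall a v p q, inR R [a; v] p -> inR R [a; v] q -> p = q)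
  (* (ii) *)
  (Hii : forall a b, a <> b -> s a = s b ->
      exists! vw : A * A, inR R [a; (fst vw)] [b; (snd vw)])
  (* (ii') *)
  (Hii' : forall a b, a <> b -> t a = t b ->
      exists! vw : A * A, inR R [(fst vw); a] [(snd vw); b])
  (* (iii) *)
  (Hiii : forall a, exists! z, isZ s t R a z)
  (* (iii') *)
  (Hiii' : forall a, exists! z, isZ' s t R a z)
  (* (v) *)
  (Hv : forall a b c, a <> b -> b <> c -> a <> c -> s a = s b -> s a = s c ->
      forall v1 v2 v3 v4 u1 u2,
      starR s R a b v1 -> starR s R a c v2 -> starR s R b a v3 -> starR s R b c v4 ->
      starR s R v1 v2 u1 -> starR s R v3 v4 u2 -> u1 = u2) :
  (forall a,
     (forall b, s b = s a -> exists! v, s v = t a /\ starP s t R a b v) /\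
     (forall v, s v = t a -> exists! b, s b = s a /\ starP s t R a b v)) /\
  exists sigma : A -> A -> A * A,
    (forall a b, t a = s b ->
       rhR s t R a b (fst (sigma a b)) /\ lhR s t R a b (snd (sigma a b))) /\
    is_QYB s t sigma /\ involutive_QYB s t sigma /\ nondegenerate_QYB s t sigma /\
    (forall p q, is_path s t p -> is_path s t q ->
       (congr s t R p q <-> congr s t (sigma_rel s t sigma) p q)).
Proof.
  split; [intro a; now apply starP_bijective |].
  exists (sigmaR s t R). split; [| split; [| split; [| split]]].
  - intros a b Hab. now apply sigmaR_harpoons.
  - now apply sigmaR_QYB.
  - now apply sigmaR_involutive.
  - now apply sigmaR_nondegenerate.
  - intros p q _ _. now apply structure_category_sigmaR.
Qed.
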